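(* Let $T=(T_{ij})_{i,j\ge1}$ be the infinite lower triangular Toeplitz matrix with $T_{ij}=\frac1{i-j+1}$ for $i\ge j$ and $T_{ij}=0$ for $i<j$. Then $T$ is invertible in the group of lower triangular matrices, and, with $w=T^{-1}\bigl(\tfrac12,\tfrac13,\tfrac14,\dots,\tfrac1{n+1},\dots\bigr)^T$, the matrix product $$\bigl(1,\tfrac12,\tfrac13,\dots,\tfrac1n,\dots\bigr)\,T^{-1}\,\bigl(\tfrac12,\tfrac13,\tfrac14,\dots,\tfrac1{n+1},\dots\bigr)^T=\sum_{n\ge1}\frac{w_n}{n}$$ converges and equals the Euler–Mascheroni constant $\gamma=\lim_{n\to\infty}\bigl(\sum_{m=1}^n\frac1m-\ln n\bigr)$. *)

(* real analysis (ln, limits) needed. Indices are 0-based: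
   row/column i here corresponds to row/column i+1 in the paper. *)
From Stdlib Require Import Reals Arith.
Open Scope R_scope.

Definition Tmat (i j : nat) : R :=
  if (j <=? i)%nat then / INR (i - j + 1) else 0.

Definition lower_tri (A : nat -> nat -> R) : Prop :=
  forall i j : nat, (i < j)%nat -> A i j = 0.

(* Product of infinite matrices; when the left factor A is lower triangular
   this finite sum over j = 0..i is the full (row-finite) product. *)
Definition lt_mul (A B : nat -> nat -> R) (i k : nat) : R :=
  sum_f_R0 (fun j => A i j * B j k) i.

Definition delta (i k : nat) : R := if Nat.eqb i k then 1 else 0.

(* w = S (1/2, 1/3, ...)^T ; paper's w_{n+1} is w n here. *)
Definition wvec (S : nat -> nat -> R) (n : nat) : R :=
  sum_f_R0 (fun j => S n j / INR (j + 2)) n.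

Definition partial_series (S : nat -> nat -> R) (N : nat) : R :=
  sum_f_R0 (fun n => wvec S n / INR (n + 1)) N.

Definition gamma_seq (n : nat) : R :=
  sum_f_R0 (fun m => / INR (m + 1)) n - ln (INR (n + 1)).

(* Write (1 - x)^t = sum_n c_n(t) x^n, where c_n(t) = (-1)^n binom(t, n) is a
   polynomial in t.  Differentiating in t (the coefficient form of
   d/dt (1-x)^t = ln(1-x) (1-x)^t) gives c_{n+1}'(t) = - sum_{j<=n} c_j(t)/(n-j+1),
   so the Gregory numbers g_n = int_0^1 c_n satisfy sum_{j<=n} g_j/(n-j+1) = [n = 0]:
   the Toeplitz matrix (g_{i-k}) is a two-sided inverse of T, and every left
   inverse of T has exactly these entries.  Hence w_n = -g_{n+1}, and the N-th
   partial sum of sum w_n/n is the integral over [0,1] of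
   f_N(t) = sum_{n<N} b_n(t)/(n+1), with b_n = -c_{n+1} >= 0 on [0,1].
   On the other side H_K - ln(K+1) is the integral of
   h_K(t) = sum_{k<K} t/((k+1)(k+1+t)).  An exact identity, proved by induction
   on N and involving the reciprocal binomials 1/binom(N+K, N), bounds
   -1/(K+1) <= h_K - f_{N+1} <= 1/(N+1) on [0,1].  Integrating, the two sequences
   of the theorem differ by at most 1/(N+1) + 1/(K+1), which forces them to
   converge to a common limit: Euler's constant. *)
From Stdlib Require Import Reals Arith Lia Lra.
From Coquelicot Require Import Coquelicot.
Open Scope R_scope.

(* [fsum f n = f 0 + ... + f (n-1)]; unlike [sum_f_R0] it allows empty sums. *)
Fixpoint fsum (f : nat -> R) (n : nat) : R :=
  match n with O => 0 | S m => fsum f m + f m end.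

Lemma sum_f_R0_fsum f n : sum_f_R0 f n = fsum f (S n).
Proof. induction n as [|n IH]; simpl in *; [lra | rewrite IH; reflexivity]. Qed.

Lemma fsum_ext f g n : (forall i, (i < n)%nat -> f i = g i) -> fsum f n = fsum g n.
Proof.
  induction n as [|n IH]; intros H; simpl; [reflexivity|].
  rewrite IH by (intros; apply H; lia). rewrite H by lia. reflexivity.
Qed.

Lemma fsum_first f n : fsum f (S n) = f O + fsum (fun i => f (S i)) n.
Proof. induction n as [|n IH]; simpl in *; [lra | rewrite IH; simpl; lra]. Qed.

Lemma fsum_split f k n : fsum f (k + n) = fsum f k + fsum (fun m => f (k + m)%nat) n.
Proof.
  induction n as [|n IH]; simpl; [rewrite Nat.add_0_r; lra|].
  rewrite Nat.add_succ_r; simpl. rewrite IH; lra.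
Qed.

Lemma fsum_rev f n : fsum f n = fsum (fun m => f (n - 1 - m)%nat) n.
Proof.
  induction n as [|n IH]; [reflexivity|].
  change (fsum f (S n)) with (fsum f n + f n). rewrite fsum_first, IH.
  replace (S n - 1 - 0)%nat with n by lia.
  rewrite (fsum_ext (fun i => f (S n - 1 - S i)%nat) (fun m => f (n - 1 - m)%nat)); [lra|].
  intros; f_equal; lia.
Qed.

Lemma fsum_plus f g n : fsum (fun i => f i + g i) n = fsum f n + fsum g n.
Proof. induction n; simpl; lra. Qed.

Lemma fsum_minus f g n : fsum (fun i => f i - g i) n = fsum f n - fsum g n.
Proof. induction n; simpl; lra. Qed.

Lemma fsum_scal c f n : fsum (fun i => c * f i) n = c * fsum f n.
Proof. induction n as [|n IH]; simpl; [ring | rewrite IH; ring]. Qed.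

Lemma fsum_le f g n : (forall i, (i < n)%nat -> f i <= g i) -> fsum f n <= fsum g n.
Proof.
  induction n as [|n IH]; intros H; simpl; [lra|].
  assert (fsum f n <= fsum g n) by (apply IH; intros; apply H; lia).
  assert (f n <= g n) by (apply H; lia). lra.
Qed.

Lemma fsum_zero f n : (forall i, (i < n)%nat -> f i = 0) -> fsum f n = 0.
Proof.
  intros H. transitivity (fsum (fun _ => 0) n); [now apply fsum_ext|].
  clear H. induction n; simpl; lra.
Qed.

Lemma fsum_nonneg f n : (forall i, (i < n)%nat -> 0 <= f i) -> 0 <= fsum f n.
Proof.
  intros H. rewrite <- (fsum_zero (fun _ => 0) n) by auto. now apply fsum_le.
Qed.

Lemma sum_f_R0_from k i F : (k <= i)%nat -> (forall j, (j < k)%nat -> F j = 0) ->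
  sum_f_R0 F i = fsum (fun m => F (k + m)%nat) (S (i - k)).
Proof.
  intros Hk H. rewrite sum_f_R0_fsum. replace (S i) with (k + S (i - k))%nat by lia.
  rewrite fsum_split, (fsum_zero F k) by auto. lra.
Qed.

Lemma div_le_one a b : 0 < b -> a <= b -> a / b <= 1.
Proof. intros Hb. apply (proj1 (Rdiv_le_1 a b Hb)). Qed.

Lemma INR_S_pos m : 0 < INR (S m).
Proof. apply lt_0_INR; lia. Qed.

Lemma INR_S_ge1 m : 1 <= INR (S m).
Proof. apply (le_INR 1); lia. Qed.

Lemma INR_neq0 k : (0 < k)%nat -> INR k <> 0.
Proof. intros; apply Rgt_not_eq, lt_0_INR; lia. Qed.

(** The coefficients of (1 - x)^t and their derivatives in t *)

(* [binc n t = (-1)^n binom(t, n)], the coefficient of x^n in (1 - x)^t. *)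
Fixpoint binc (n : nat) (t : R) : R :=
  match n with O => 1 | S m => binc m t * (INR m - t) / INR (S m) end.

Fixpoint dbinc (n : nat) (t : R) : R :=
  match n with O => 0 | S m => (dbinc m t * (INR m - t) - binc m t) / INR (S m) end.

Lemma binc_is_derive n t : is_derive (binc n) t (dbinc n t).
Proof.
  induction n as [|n IH]; cbn [binc dbinc].
  - auto_derive; auto.
  - assert (Dlin : is_derive (fun t => INR n - t) t (-1)) by (auto_derive; auto; ring).
    pose proof (is_derive_scal _ t (/ INR (S n)) _
      (is_derive_mult (binc n) (fun t => INR n - t) t _ _ IH Dlin Rmult_comm)) as D.
    apply (is_derive_ext (fun u => / INR (S n) * (binc n u * (INR n - u)))).
    { intros u. simpl. unfold Rdiv. ring. }
    replace ((dbinc n t * (INR n - t) - binc n t) / INR (S n))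
      with (/ INR (S n) * (dbinc n t * (INR n - t) + binc n t * (-1))) by (unfold Rdiv; ring).
    exact D.
Qed.

Lemma binc_continuous n t : continuous (binc n) t.
Proof.
  exact (ex_derive_continuous (K:=R_AbsRing) (V:=R_NormedModule) (binc n) t
           (ex_intro _ _ (binc_is_derive n t))).
Qed.

Lemma dbinc_continuous n t : continuous (dbinc n) t.
Proof.
  induction n as [|n IH]; simpl.
  - apply (continuous_const (U:=R_UniformSpace) (V:=R_UniformSpace)).
  - apply (continuous_mult (K:=R_AbsRing)
             (fun u => dbinc n u * (INR n - u) - binc n u) (fun _ => / INR (S n)));
      [|apply continuous_const].
    apply (continuous_minus (V:=R_NormedModule)); [|apply binc_continuous].
    apply (continuous_mult (K:=R_AbsRing)); [exact IH|].
    apply (continuous_minus (V:=R_NormedModule)); [apply continuous_const | apply continuous_id].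
Qed.

Lemma binc_S_at0 n : binc (S n) 0 = 0.
Proof. induction n as [|n IH]; cbn [binc] in *; [simpl; field | rewrite IH; unfold Rdiv; ring]. Qed.

Lemma binc_SS_at1 n : binc (S (S n)) 1 = 0.
Proof. induction n as [|n IH]; cbn [binc] in *; [simpl; field | rewrite IH; unfold Rdiv; ring]. Qed.

(* The convolution of the coefficients with the harmonic sequence,
   i.e. the coefficient of x^n in (1-x)^t * (-ln(1-x)/x). *)
Definition binc_conv (n : nat) (t : R) : R :=
  fsum (fun j => binc j t / INR (n - j + 1)) (S n).

Lemma binc_conv_rec m t :
  INR (S (S m)) * binc_conv (S m) t = (INR (S m) - t) * binc_conv m t + binc (S m) t.
Proof.
  unfold binc_conv. rewrite <- !fsum_scal.
  (* Split (m+2)/(m+2-j) as 1 + j/(m+2-j). *)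
  transitivity (fsum (fun j => binc j t) (S (S m))
                + fsum (fun j => INR j * binc j t / INR (S m - j + 1)) (S (S m))).
  { rewrite <- fsum_plus. apply fsum_ext. intros j Hj.
    assert (INR j <= INR m + 1) by (rewrite <- S_INR; apply le_INR; lia).
    rewrite plus_INR, minus_INR, !S_INR by lia. simpl (INR 0). field. lra. }
  (* Shift the index of the second sum using j c_j = (j - 1 - t) c_{j-1}. *)
  rewrite (fsum_first (fun j => INR j * binc j t / INR (S m - j + 1))).
  rewrite (fsum_ext (fun i => INR (S i) * binc (S i) t / INR (S m - S i + 1))
                    (fun i => (INR i - t) * binc i t / INR (m - i + 1))).
  2:{ intros i Hi. replace (S m - S i + 1)%nat with (m - i + 1)%nat by lia.
      cbn [binc]. field. split; apply INR_neq0; lia. }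
  change (fsum (fun j => binc j t) (S (S m))) with (fsum (fun j => binc j t) (S m) + binc (S m) t).
  simpl (INR 0). rewrite Rmult_0_l, Rdiv_0_l, Rplus_0_l.
  enough (fsum (fun j => binc j t) (S m) + fsum (fun i => (INR i - t) * binc i t / INR (m - i + 1)) (S m) =
          fsum (fun i => (INR (S m) - t) * (binc i t / INR (m - i + 1))) (S m)) by lra.
  rewrite <- fsum_plus. apply fsum_ext. intros i Hi.
  assert (INR i <= INR m) by (apply le_INR; lia).
  rewrite plus_INR, minus_INR, (S_INR m) by lia. simpl (INR 1). field. lra.
Qed.

Lemma binc_conv_dbinc n t : binc_conv n t = - dbinc (S n) t.
Proof.
  induction n as [|n IH].
  - unfold binc_conv. simpl. field.
  - apply (Rmult_eq_reg_l (INR (S (S n)))); [|apply INR_neq0; lia].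
    rewrite binc_conv_rec, IH. cbn [dbinc]. field. split; apply INR_neq0; lia.
Qed.

(** Gregory numbers and the inverse of T *)

Lemma is_RInt_ext_all (g f : R -> R) a b (l : R) :
  (forall x, f x = g x) -> is_RInt g a b l -> is_RInt f a b l.
Proof. intros E. apply (is_RInt_ext (V:=R_NormedModule) g f). intros; symmetry; auto. Qed.

Lemma is_RInt_value (f : R -> R) a b (l l' : R) : is_RInt f a b l -> l = l' -> is_RInt f a b l'.
Proof. intros H <-; exact H. Qed.

Lemma is_RInt_scal_R (f : R -> R) a b k (l : R) :
  is_RInt f a b l -> is_RInt (fun t => k * f t) a b (k * l).
Proof. apply (is_RInt_scal (V:=R_NormedModule)). Qed.

Lemma is_RInt_fsum (F : nat -> R -> R) (v : nat -> R) a b n :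
  (forall j, is_RInt (F j) a b (v j)) ->
  is_RInt (fun t => fsum (fun j => F j t) n) a b (fsum v n).
Proof.
  intros H. induction n as [|n IH]; simpl.
  - eapply is_RInt_value; [apply (is_RInt_const (V:=R_NormedModule) a b 0)|].
    unfold scal; simpl; unfold mult; simpl. ring.
  - apply (is_RInt_plus (V:=R_NormedModule) _ _ _ _ _ _ IH (H n)).
Qed.

Definition greg (n : nat) : R := RInt (binc n) 0 1.

Lemma greg_is_RInt n : is_RInt (binc n) 0 1 (greg n).
Proof.
  apply (RInt_correct (V:=R_CompleteNormedModule)), (ex_RInt_continuous (V:=R_CompleteNormedModule)).
  intros; apply binc_continuous.
Qed.

Lemma greg_convolution n :
  fsum (fun j => greg j / INR (n - j + 1)) (S n) = if Nat.eqb n 0 then 1 else 0.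
Proof.
  assert (Hsum : is_RInt (binc_conv n) 0 1 (fsum (fun j => greg j / INR (n - j + 1)) (S n))).
  { apply (is_RInt_fsum (fun j t => binc j t / INR (n - j + 1))). intros j.
    apply (is_RInt_ext_all (fun t => / INR (n - j + 1) * binc j t)); [intros x; unfold Rdiv; ring|].
    eapply is_RInt_value; [apply is_RInt_scal_R, greg_is_RInt | apply Rmult_comm]. }
  assert (Hftc : is_RInt (binc_conv n) 0 1 (binc (S n) 0 - binc (S n) 1)).
  { apply (is_RInt_ext_all (fun t => -1 * dbinc (S n) t)); [intros x; rewrite binc_conv_dbinc; ring|].
    eapply is_RInt_value.
    - apply is_RInt_scal_R, (is_RInt_derive (V:=R_CompleteNormedModule) (binc (S n)));
        intros; [apply binc_is_derive | apply dbinc_continuous].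
    - unfold minus, plus, opp; simpl. ring. }
  apply (is_RInt_unique (V:=R_CompleteNormedModule)) in Hsum, Hftc.
  rewrite <- Hsum, Hftc, binc_S_at0.
  destruct n; [cbn [binc]; simpl; field | rewrite binc_SS_at1; simpl; ring].
Qed.

Lemma greg_convolution_rev n :
  fsum (fun m => greg (n - m) / INR (m + 1)) (S n) = if Nat.eqb n 0 then 1 else 0.
Proof.
  rewrite <- greg_convolution, (fsum_rev (fun j => greg j / INR (n - j + 1))).
  apply fsum_ext. intros m Hm.
  replace (S n - 1 - m)%nat with (n - m)%nat by lia.
  replace (n - (n - m) + 1)%nat with (m + 1)%nat by lia. reflexivity.
Qed.

Lemma delta_shift k n : delta (k + n) k = if Nat.eqb n 0 then 1 else 0.
Proof.
  unfold delta. destruct n.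
  - now rewrite Nat.add_0_r, Nat.eqb_refl.
  - replace (Nat.eqb (k + S n) k) with false by (symmetry; apply Nat.eqb_neq; lia). reflexivity.
Qed.

Lemma lt_mul_Tmat X i k : (k <= i)%nat ->
  lt_mul X Tmat i k = fsum (fun m => X i (k + m)%nat / INR (m + 1)) (S (i - k)).
Proof.
  intros Hk. unfold lt_mul. rewrite (sum_f_R0_from k i); auto.
  - apply fsum_ext. intros m _. unfold Tmat.
    replace (k <=? k + m)%nat with true by (symmetry; apply Nat.leb_le; lia).
    replace (k + m - k + 1)%nat with (m + 1)%nat by lia. reflexivity.
  - intros j Hj. unfold Tmat. replace (k <=? j)%nat with false by (symmetry; apply Nat.leb_gt; lia). ring.
Qed.

Lemma left_inverse_entries X :
  (forall i k, lt_mul X Tmat i k = delta i k) -> forall n k, X (k + n)%nat k = greg n.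
Proof.
  intros HX n. induction n as [n IH] using lt_wf_ind. intros k.
  pose proof (HX (k + n)%nat k) as H.
  rewrite lt_mul_Tmat, delta_shift, <- greg_convolution_rev, !fsum_first in H by lia.
  replace (k + n - k)%nat with n in H by lia.
  rewrite (fsum_ext (fun i => X (k + n)%nat (k + S i)%nat / INR (S i + 1))
                    (fun i => greg (n - S i) / INR (S i + 1))) in H.
  2:{ intros i Hi. replace (k + n)%nat with ((k + S i) + (n - S i))%nat by lia.
      rewrite IH by lia. reflexivity. }
  rewrite Nat.add_0_r, Nat.sub_0_r in H. simpl (INR (0 + 1)) in H. lra.
Qed.

Definition Tinv (i k : nat) : R := if (k <=? i)%nat then greg (i - k) else 0.

Lemma Tinv_lower_tri : lower_tri Tinv.
Proof.
  intros i j Hij. unfold Tinv. now replace (j <=? i)%nat with false by (symmetry; apply Nat.leb_gt; lia).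
Qed.

Lemma lt_mul_above X Y i k : lower_tri Y -> (i < k)%nat -> lt_mul X Y i k = 0.
Proof.
  intros HY Hik. unfold lt_mul. rewrite sum_f_R0_fsum. apply fsum_zero.
  intros j Hj. rewrite HY by lia. ring.
Qed.

Lemma Tmat_lower_tri : lower_tri Tmat.
Proof.
  intros i j Hij. unfold Tmat. now replace (j <=? i)%nat with false by (symmetry; apply Nat.leb_gt; lia).
Qed.

Lemma delta_above i k : (i < k)%nat -> delta i k = 0.
Proof. intros H. unfold delta. now replace (Nat.eqb i k) with false by (symmetry; apply Nat.eqb_neq; lia). Qed.

Lemma Tinv_left i k : lt_mul Tinv Tmat i k = delta i k.
Proof.
  destruct (le_lt_dec k i) as [Hk|Hk];
    [|rewrite lt_mul_above, delta_above by (auto using Tmat_lower_tri); reflexivity].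
  replace (delta i k) with (delta (k + (i - k)) k) by (f_equal; lia).
  rewrite lt_mul_Tmat, delta_shift, <- greg_convolution_rev by lia.
  apply fsum_ext. intros m Hm. unfold Tinv.
  replace (k + m <=? i)%nat with true by (symmetry; apply Nat.leb_le; lia).
  now replace (i - (k + m))%nat with (i - k - m)%nat by lia.
Qed.

Lemma Tinv_right i k : lt_mul Tmat Tinv i k = delta i k.
Proof.
  destruct (le_lt_dec k i) as [Hk|Hk];
    [|rewrite lt_mul_above, delta_above by (auto using Tinv_lower_tri); reflexivity].
  unfold lt_mul. rewrite (sum_f_R0_from k i _ Hk).
  2:{ intros j Hj. rewrite Tinv_lower_tri by exact Hj. ring. }
  replace (delta i k) with (delta (k + (i - k)) k) by (f_equal; lia).
  rewrite delta_shift, <- greg_convolution.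
  apply fsum_ext. intros m Hm. unfold Tinv, Tmat.
  replace (k <=? k + m)%nat with true by (symmetry; apply Nat.leb_le; lia).
  replace (k + m <=? i)%nat with true by (symmetry; apply Nat.leb_le; lia).
  replace (k + m - k)%nat with m by lia.
  replace (i - (k + m) + 1)%nat with (i - k - m + 1)%nat by lia.
  unfold Rdiv. ring.
Qed.

Lemma wvec_greg X : (forall i k, lt_mul X Tmat i k = delta i k) ->
  forall n, wvec X n = - greg (S n).
Proof.
  intros HX n. pose proof (greg_convolution_rev (S n)) as H.
  rewrite fsum_first in H. unfold wvec. rewrite sum_f_R0_fsum.
  rewrite (fsum_ext (fun j => X n j / INR (j + 2)) (fun m => greg (S n - S m) / INR (S m + 1))).
  - rewrite Nat.sub_0_r in H. simpl (INR (0 + 1)) in H. simpl (S n =? 0)%nat in H. lra.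
  - intros j Hj. replace n with (j + (n - j))%nat at 1 by lia. rewrite (left_inverse_entries X HX).
    replace (S n - S j)%nat with (n - j)%nat by lia. now replace (S j + 1)%nat with (j + 2)%nat by lia.
Qed.

Definition greg_series (N : nat) : R := fsum (fun n => - greg (S n) / INR (S n)) N.

Lemma partial_series_greg X N : (forall i k, lt_mul X Tmat i k = delta i k) ->
  partial_series X N = greg_series (S N).
Proof.
  intros HX. unfold partial_series, greg_series. rewrite sum_f_R0_fsum.
  apply fsum_ext. intros n _. rewrite (wvec_greg X HX). now replace (n + 1)%nat with (S n) by lia.
Qed.

(** Pointwise comparison of the Newton and digamma series on [0,1] *)

Fixpoint qprod (n : nat) (t : R) : R :=
  match n with O => 1 | S m => qprod m t * (1 - t / INR (S m)) end.

Definition bterm (n : nat) (t : R) : R := t * qprod n t / INR (S n).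

Lemma binc_S_bterm n t : binc (S n) t = - bterm n t.
Proof.
  unfold bterm. induction n as [|n IH]; cbn [binc qprod] in *.
  - simpl. field.
  - rewrite IH, (S_INR (S n)), (S_INR n). pose proof (pos_INR n).
    field. split; apply Rgt_not_eq; lra.
Qed.

Lemma qprod_bounds n t : 0 <= t <= 1 -> 0 <= qprod n t <= 1.
Proof.
  intros Ht. induction n as [|n IH]; cbn [qprod]; [lra|].
  pose proof (INR_S_ge1 n).
  assert (0 <= t / INR (S n) <= 1).
  { split; [apply Rdiv_le_0_compat; lra|]. apply div_le_one; lra. }
  split; [apply Rmult_le_pos; lra|].
  apply Rle_trans with (qprod n t * 1); [apply Rmult_le_compat_l|]; lra.
Qed.

Lemma bterm_nonneg n t : 0 <= t <= 1 -> 0 <= bterm n t.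
Proof.
  intros Ht. unfold bterm. pose proof (qprod_bounds n t Ht). pose proof (INR_S_pos n).
  apply Rdiv_le_0_compat; [apply Rmult_le_pos|]; lra.
Qed.

(* The b_n telescope: b_n = q_n - q_{n+1}. *)
Lemma fsum_bterm n t : fsum (fun i => bterm i t) n = 1 - qprod n t.
Proof.
  induction n as [|n IH]; cbn [fsum qprod]; [lra|].
  rewrite IH. unfold bterm. field. apply INR_neq0; lia.
Qed.

(* [rbinom N K = prod_{m=1}^N m/(m+K) = 1 / binom(N+K, N)]. *)
Fixpoint rbinom (N K : nat) : R :=
  match N with O => 1 | S M => rbinom M K * INR (S M) / (INR (S M) + INR K) end.

Lemma rbinom_0 N : rbinom N 0 = 1.
Proof.
  induction N as [|N IH]; cbn [rbinom]; [reflexivity|].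
  rewrite IH. simpl (INR 0). rewrite Rplus_0_r. field. apply INR_neq0; lia.
Qed.

Lemma rbinom_shift N K : (INR N + INR K + 1) * rbinom N (S K) = (INR K + 1) * rbinom N K.
Proof.
  induction N as [|N IH]; [simpl; ring|].
  cbn [rbinom]. rewrite !S_INR in *.
  pose proof (pos_INR N). pose proof (pos_INR K).
  apply (Rmult_eq_reg_l (INR N + 1 + INR K)); [|lra].
  transitivity ((INR N + 1) * ((INR N + INR K + 1) * rbinom N (S K))); [field; lra|].
  rewrite IH. field. lra.
Qed.

(* The factors of [rbinom] lie in [0,1], so it decreases in N from 1. *)
Lemma rbinom_step_bounds N K : 0 <= INR (S N) / (INR (S N) + INR K) <= 1.
Proof.
  pose proof (INR_S_pos N). pose proof (pos_INR K).
  split; [apply Rdiv_le_0_compat; lra | apply div_le_one; lra].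
Qed.

Lemma rbinom_bounds N K : 0 <= rbinom N K <= 1.
Proof.
  induction N as [|N IH]; cbn [rbinom]; [lra|].
  pose proof (rbinom_step_bounds N K). unfold Rdiv in *. rewrite Rmult_assoc.
  split; [apply Rmult_le_pos; lra|].
  apply Rle_trans with (rbinom N K * 1); [apply Rmult_le_compat_l|]; lra.
Qed.

Lemma rbinom_le_first N K : rbinom (S N) K <= / (INR K + 1).
Proof.
  induction N as [|N IH].
  - cbn [rbinom]. pose proof (pos_INR K). simpl. apply Req_le. field. lra.
  - change (rbinom (S (S N)) K) with (rbinom (S N) K * INR (S (S N)) / (INR (S (S N)) + INR K)).
    pose proof (rbinom_bounds (S N) K). pose proof (rbinom_step_bounds (S N) K).
    unfold Rdiv in *. rewrite Rmult_assoc.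
    apply Rle_trans with (rbinom (S N) K * 1); [apply Rmult_le_compat_l|]; lra.
Qed.

Definition rbinom_sum (N K : nat) : R := fsum (fun k => rbinom N (S k) / INR (S k)) K.

Lemma rbinom_sum_closed N K : rbinom_sum (S N) K = (1 - rbinom (S N) K) / INR (S N).
Proof.
  unfold rbinom_sum. induction K as [|K IH]; cbn [fsum].
  - rewrite rbinom_0. unfold Rdiv. ring.
  - rewrite IH. pose proof (rbinom_shift (S N) K) as Hs.
    pose proof (INR_S_pos N). pose proof (pos_INR K).
    rewrite (S_INR K). rewrite (S_INR N) in *.
    replace (rbinom (S N) K) with ((INR N + 1 + INR K + 1) * rbinom (S N) (S K) / (INR K + 1))
      by (rewrite Hs; field; lra).
    field. lra.
Qed.

Definition Esum (N K : nat) (t : R) : R :=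
  fsum (fun k => rbinom N (S k) / (INR (S k) * (INR (S k) + t))) K.

(* [digamma_part K t = sum_{k<K} t/((k+1)(k+1+t))], tending to psi(1+t) + gamma. *)
Definition digamma_part (K : nat) (t : R) : R :=
  fsum (fun k => t / (INR (S k) * (INR (S k) + t))) K.

(* [newton_part N t = sum_{n<N} b_n(t)/(n+1)], the Newton series of psi(1+t) + gamma. *)
Definition newton_part (N : nat) (t : R) : R := fsum (fun n => bterm n t / INR (S n)) N.

(* [remainder N K t = sum_{n<N} b_n(t)/((n+1) binom(n+1+K, K))], the error of the
   truncation at K of the digamma side. *)
Definition remainder (N K : nat) (t : R) : R :=
  fsum (fun n => bterm n t * rbinom (S n) K / INR (S n)) N.

Lemma Esum_step N K t : 0 <= t ->
  INR (S N) * Esum N K t - (INR (S N) - t) * Esum (S N) K t = (1 - rbinom (S N) K) / INR (S N).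
Proof.
  intros Ht. rewrite <- rbinom_sum_closed. unfold Esum, rbinom_sum.
  rewrite <- !fsum_scal, <- fsum_minus. apply fsum_ext. intros k _.
  cbn [rbinom]. pose proof (INR_S_pos N). pose proof (INR_S_pos k).
  rewrite (S_INR k), (S_INR N) in *. field. repeat split; lra.
Qed.

(* The exact comparison identity h_K - f_N = t q_N E_{N,K} - Y_{N,K}, by
   induction on N: the step is [Esum_step] multiplied by b_N/(N+1). *)
Lemma comparison_identity N K t : 0 <= t ->
  digamma_part K t - newton_part N t = t * qprod N t * Esum N K t - remainder N K t.
Proof.
  intros Ht. induction N as [|N IH].
  - unfold newton_part, remainder, digamma_part, Esum. cbn [fsum qprod rbinom].
    rewrite !Rminus_0_r, Rmult_1_r, <- fsum_scal. apply fsum_ext. intros i _.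
    pose proof (INR_S_pos i). field. split; lra.
  - unfold newton_part, remainder in *. cbn [fsum qprod].
    pose proof (INR_S_pos N).
    assert (HE : Esum N K t = ((INR (S N) - t) * Esum (S N) K t
                               + (1 - rbinom (S N) K) / INR (S N)) / INR (S N))
      by (rewrite <- (Esum_step N K t Ht); field; lra).
    rewrite HE in IH. unfold bterm in *. cbn [qprod] in *.
    enough (t * qprod N t * (((INR (S N) - t) * Esum (S N) K t + (1 - rbinom (S N) K) / INR (S N)) / INR (S N))
            - t * qprod N t / INR (S N) / INR (S N)
            = t * (qprod N t * (1 - t / INR (S N))) * Esum (S N) K t
              - t * qprod N t * rbinom (S N) K / INR (S N) / INR (S N)) by lra.
    field. lra.
Qed.

(* Both terms of the identity are small: 0 <= E_{N+1,K} <= 1/(N+1) ... *)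
Lemma Esum_bounds N K t : 0 <= t -> 0 <= Esum (S N) K t <= / INR (S N).
Proof.
  intros Ht. split.
  - apply fsum_nonneg. intros k _. pose proof (INR_S_pos k). pose proof (rbinom_bounds (S N) (S k)).
    apply Rdiv_le_0_compat; [lra|]. apply Rmult_lt_0_compat; lra.
  - apply Rle_trans with (rbinom_sum (S N) K).
    + apply fsum_le. intros k _.
      pose proof (rbinom_bounds (S N) (S k)). pose proof (INR_S_ge1 k).
      unfold Rdiv. apply Rmult_le_compat_l; [lra|]. apply Rinv_le_contravar; [lra|].
      apply Rle_trans with (INR (S k) * 1); [lra|]. apply Rmult_le_compat_l; lra.
    + rewrite rbinom_sum_closed. pose proof (rbinom_bounds (S N) K). pose proof (INR_S_pos N).
      unfold Rdiv. rewrite <- (Rmult_1_l (/ INR (S N))) at 2.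
      apply Rmult_le_compat_r; [apply Rlt_le, Rinv_0_lt_compat|]; lra.
Qed.

(* ... and 0 <= Y_{N,K} <= 1/(K+1), since binom(n+1+K, K) >= K+1 and sum b_n <= 1. *)
Lemma remainder_bounds N K t : 0 <= t <= 1 -> 0 <= remainder N K t <= / (INR K + 1).
Proof.
  intros Ht. pose proof (pos_INR K). split.
  - apply fsum_nonneg. intros n _.
    pose proof (bterm_nonneg n t Ht). pose proof (rbinom_bounds (S n) K). pose proof (INR_S_pos n).
    apply Rdiv_le_0_compat; [apply Rmult_le_pos|]; lra.
  - apply Rle_trans with (fsum (fun n => / (INR K + 1) * bterm n t) N).
    + apply fsum_le. intros n _.
      pose proof (bterm_nonneg n t Ht). pose proof (rbinom_le_first n K).
      pose proof (rbinom_bounds (S n) K). pose proof (INR_S_ge1 n).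
      unfold Rdiv. rewrite Rmult_assoc, Rmult_comm. apply Rmult_le_compat_r; [lra|].
      apply Rle_trans with (rbinom (S n) K * 1); [|lra]. apply Rmult_le_compat_l; [lra|].
      rewrite <- Rinv_1. apply Rinv_le_contravar; lra.
    + rewrite fsum_scal, fsum_bterm. pose proof (qprod_bounds N t Ht).
      assert (0 < / (INR K + 1)) by (apply Rinv_0_lt_compat; lra).
      apply Rle_trans with (/ (INR K + 1) * 1); [apply Rmult_le_compat_l|]; lra.
Qed.

Lemma pointwise_bound N K t : 0 <= t <= 1 ->
  - / (INR K + 1) <= digamma_part K t - newton_part (S N) t <= / INR (S N).
Proof.
  intros Ht. rewrite comparison_identity by lra.
  pose proof (remainder_bounds (S N) K t Ht). pose proof (Esum_bounds N K t ltac:(lra)).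
  pose proof (qprod_bounds (S N) t Ht).
  assert (0 <= t * qprod (S N) t <= 1).
  { split; [apply Rmult_le_pos|apply Rle_trans with (1 * 1); [apply Rmult_le_compat|]]; lra. }
  assert (0 <= t * qprod (S N) t * Esum (S N) K t <= / INR (S N)).
  { split; [apply Rmult_le_pos|apply Rle_trans with (1 * Esum (S N) K t); [apply Rmult_le_compat_r|]]; lra. }
  lra.
Qed.

(** Integrating the comparison *)

(* int_0^1 t/(c(c+t)) dt = 1/c - ln((c+1)/c), via the antiderivative t/c - ln(c+t). *)
Lemma digamma_term_is_RInt c : 0 < c ->
  is_RInt (fun t => t / (c * (c + t))) 0 1 (/ c - (ln (c + 1) - ln c)).
Proof.
  intros Hc. eapply is_RInt_value.
  - apply (is_RInt_derive (V:=R_CompleteNormedModule) (fun t => t / c - ln (c + t)));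
      intros x Hx; rewrite Rmin_left, Rmax_right in Hx by lra.
    + auto_derive; [lra|]. field. split; lra.
    + apply (ex_derive_continuous (K:=R_AbsRing) (V:=R_NormedModule)).
      auto_derive. apply Rgt_not_eq, Rmult_lt_0_compat; lra.
  - unfold minus, plus, opp; simpl. rewrite Rplus_0_r. unfold Rdiv. ring.
Qed.

(* [harmonic_ln K = H_K - ln (K+1)], the integral of [digamma_part K]. *)
Definition harmonic_ln (K : nat) : R :=
  fsum (fun k => / INR (S k) - (ln (INR (S k) + 1) - ln (INR (S k)))) K.

Lemma digamma_part_is_RInt K : is_RInt (digamma_part K) 0 1 (harmonic_ln K).
Proof.
  apply (is_RInt_fsum (fun k t => t / (INR (S k) * (INR (S k) + t)))).
  intros k. apply digamma_term_is_RInt, INR_S_pos.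
Qed.

Lemma gamma_seq_harmonic_ln K : gamma_seq K = harmonic_ln K + / INR (S K).
Proof.
  unfold gamma_seq, harmonic_ln. rewrite sum_f_R0_fsum, fsum_minus. cbn [fsum].
  rewrite (fsum_ext (fun m => / INR (m + 1)) (fun k => / INR (S k))) by (intros; do 2 f_equal; lia).
  (* The logarithms telescope to ln (K+1). *)
  assert (Htel : forall n, fsum (fun k => ln (INR (S k) + 1) - ln (INR (S k))) n = ln (INR n + 1)).
  { induction n as [|n IH]; cbn [fsum]; [simpl; rewrite Rplus_0_l, ln_1; ring|].
    rewrite IH, (S_INR n). ring. }
  rewrite Htel. replace (K + 1)%nat with (S K) by lia. rewrite (S_INR K). ring.
Qed.

Lemma newton_part_is_RInt N : is_RInt (newton_part N) 0 1 (greg_series N).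
Proof.
  apply (is_RInt_fsum (fun n t => bterm n t / INR (S n))). intros n.
  apply (is_RInt_ext_all (fun t => (- / INR (S n)) * binc (S n) t)).
  { intros x. rewrite binc_S_bterm. field. apply INR_neq0; lia. }
  eapply is_RInt_value; [apply is_RInt_scal_R, greg_is_RInt|]. field. apply INR_neq0; lia.
Qed.

Lemma is_RInt_bounds (u : R -> R) (a lo hi : R) : is_RInt u 0 1 a ->
  (forall t, 0 <= t <= 1 -> lo <= u t <= hi) -> lo <= a <= hi.
Proof.
  intros Hu Hb.
  assert (Hc : forall c : R, is_RInt (fun _ => c) 0 1 c).
  { intros c. eapply is_RInt_value; [apply (is_RInt_const (V:=R_NormedModule))|].
    unfold scal; simpl; unfold mult; simpl. ring. }
  split; [apply (is_RInt_le _ _ 0 1 _ _ ltac:(lra) (Hc lo) Hu)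
         |apply (is_RInt_le _ _ 0 1 _ _ ltac:(lra) Hu (Hc hi))];
    intros; apply Hb; lra.
Qed.

Lemma integral_bound N K :
  - / (INR K + 1) <= harmonic_ln K - greg_series (S N) <= / INR (S N).
Proof.
  apply (is_RInt_bounds (fun t => digamma_part K t - newton_part (S N) t)).
  - apply (is_RInt_minus (V:=R_NormedModule)); [apply digamma_part_is_RInt | apply newton_part_is_RInt].
  - intros t Ht. now apply pointwise_bound.
Qed.

Lemma inv_S_small e : 0 < e -> exists M, forall n, (M <= n)%nat -> / INR (S n) < e.
Proof.
  intros He. destruct (INR_archimed e 1 He) as [M HM]. exists M. intros n Hn.
  assert (INR M <= INR (S n)) by (apply le_INR; lia).
  pose proof (INR_S_pos n).
  apply (Rmult_lt_reg_l (INR (S n))); auto. rewrite Rinv_r by lra.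
  apply Rlt_le_trans with (INR M * e); [lra|]. apply Rmult_le_compat_r; lra.
Qed.

Lemma common_limit (a g : nat -> R) :
  (forall N K, Rabs (g K - a N) <= / INR (S N) + / INR (S K)) ->
  exists L, Un_cv g L /\ Un_cv a L.
Proof.
  intros B.
  assert (Ca : Cauchy_crit a).
  { intros eps He. destruct (inv_S_small (eps / 5)) as [M HM]; [lra|]. exists M. intros n m Hn Hm.
    unfold R_dist. pose proof (B n n). pose proof (B m n). pose proof (HM n Hn). pose proof (HM m Hm).
    replace (a n - a m) with (- (g n - a n) + (g n - a m)) by ring.
    eapply Rle_lt_trans; [apply Rabs_triang|]. rewrite Rabs_Ropp. lra. }
  destruct (Rcomplete.R_complete a Ca) as [L HL]. exists L. split; [|exact HL].
  intros eps He. destruct (inv_S_small (eps / 4)) as [M HM]; [lra|].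
  destruct (HL (eps / 4)) as [M2 HM2]; [lra|]. exists M. intros K HK.
  set (N := Nat.max K M2).
  pose proof (B N K). pose proof (HM K HK). pose proof (HM N ltac:(lia)). pose proof (HM2 N ltac:(lia)).
  unfold R_dist in *. replace (g K - L) with ((g K - a N) + (a N - L)) by ring.
  eapply Rle_lt_trans; [apply Rabs_triang|]. lra.
Qed.


Theorem mainTheorem5 :
  (exists S : nat -> nat -> R,
      lower_tri S /\
      (forall i k, lt_mul S Tmat i k = delta i k) /\
      (forall i k, lt_mul Tmat S i k = delta i k)) /\
  (forall S : nat -> nat -> R,
      lower_tri S ->
      (forall i k, lt_mul S Tmat i k = delta i k) ->
      (forall i k, lt_mul Tmat S i k = delta i k) ->
      exists L : R, Un_cv gamma_seq L /\ Un_cv (partial_series S) L).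
Proof.
  split.
  - exists Tinv. split; [exact Tinv_lower_tri | split; [exact Tinv_left | exact Tinv_right]].
  - intros X _ HX _. apply common_limit. intros N K.
    rewrite partial_series_greg, gamma_seq_harmonic_ln by exact HX.
    pose proof (integral_bound N K). rewrite (S_INR K) in *.
    apply Rabs_le. lra.
Qed.
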